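(* Let $0<b<c$ and $x_1,x_2,\dots\in\mathbb{R}^d$. Define $D_0=\frac{bc}{c-b}I$ and $D_t=\big(D_{t-1}^{-1}+c^{-1}I\big)^{-1}+x_tx_t^\top$ for $t\ge1$, and $D'_{t-1}=\big(I+c^{-1}D_{t-1}\big)^{-1}$. Then for all $t\ge1$, \[ D'_{t-1}D_t^{-1}x_tx_t^\top D_t^{-1}D'_{t-1}-D_{t-1}^{-1}+D'_{t-1}\big(D_t^{-1}D'_{t-1}+c^{-1}I\big)\preceq 0, \] where $A\preceq 0$ means $A$ is negative semidefinite. *)

From HB Require Import structures.
From mathcomp Require Import all_boot all_order all_algebra.
Set Implicit Arguments. Unset Strict Implicit. Unset Printing Implicit Defensive.
Import Order.TTheory GRing.Theory Num.Theory.
Local Open Scope ring_scope.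

Definition nsd (R : realFieldType) (d : nat) (A : 'M[R]_d) : Prop :=
  A^T = A /\ forall v : 'cV[R]_d, (v^T *m A *m v) 0 0 <= 0.

Fixpoint Dseq (R : realFieldType) (d : nat) (b c : R) (x : nat -> 'cV[R]_d)
  (t : nat) : 'M[R]_d :=
  match t with
  | 0 => (b * c / (c - b))%:M
  | t'.+1 => invmx (invmx (Dseq b c x t') + c^-1%:M) + x t'.+1 *m (x t'.+1)^T
  end.

Definition Dprime (R : realFieldType) (d : nat) (b c : R) (x : nat -> 'cV[R]_d)
  (t : nat) : 'M[R]_d :=
  invmx (1%:M + c^-1 *: Dseq b c x t).

From HB Require Import structures.
From mathcomp Require Import all_boot all_order all_algebra.
From mathcomp Require Import ring lra.
Import Order.TTheory GRing.Theory Num.Theory.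
Local Open Scope ring_scope.
Set Implicit Arguments. Unset Strict Implicit.

(* Writing A = D_{t-1}, K = I + A/c and M = A^{-1} + I/c = A^{-1} K, the
   recursion reads D_t = M^{-1} + x x^T, so by Sherman-Morrison
   D_t^{-1} = M - k M x x^T M with k = 1/(1 + x^T M x).  Since K^{-1} M = M K^{-1}
   = A^{-1}, the whole expression collapses to (k^2 - k) (A^{-1} x)(A^{-1} x)^T,
   and 0 < k <= 1 because M is positive definite. *)

Section ShermanMorrison.
Variables (R : fieldType) (d : nat) (M : 'M[R]_d) (x : 'cV[R]_d).
Hypothesis uM : M \in unitmx.
Let s : R := (x^T *m M *m x) 0 0.
Let k := (1 + s)^-1.
Hypothesis den_neq0 : 1 + s != 0.

Let quad_scalar : x^T *m M *m x = s%:M := mx11_scalar _.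

Lemma invmx_add_outer :
  invmx (invmx M + x *m x^T) = M - k *: (M *m x *m x^T *m M).
Proof.
have ks : 1 - k * s = k by rewrite /k; field.
have xxMx : x *m x^T *m M *m x = s *: x.
  by rewrite -2!mulmxA (mulmxA x^T) quad_scalar mul_mx_scalar.
set S := M - _; have DS : (invmx M + x *m x^T) *m S = 1%:M.
  rewrite /S mulmxDl !mulmxBr -!scalemxAr !mulmxA mulVmx // mul1mx.
  rewrite xxMx -2!scalemxAl scalerA -{2}[x *m x^T *m M]scale1r -scalerBl.
  by rewrite ks subrK.
have [uD _] := mulmx1_unit DS.
by rewrite -[LHS]mulmx1 -DS mulmxA mulVmx // mul1mx.
Qed.

Lemma invmx_add_outer_mulmx : invmx (invmx M + x *m x^T) *m x = k *: (M *m x).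
Proof.
rewrite invmx_add_outer mulmxBl -scalemxAl -!mulmxA (mulmxA x^T) quad_scalar.
rewrite mul_mx_scalar -scalemxAr scalerA -[X in X - _]scale1r -scalerBl.
by congr (_ *: _); rewrite /k; field.
Qed.

Lemma trmx_mulmx_invmx_add_outer :
  x^T *m invmx (invmx M + x *m x^T) = k *: (x^T *m M).
Proof.
rewrite invmx_add_outer mulmxBr -scalemxAr !mulmxA quad_scalar mul_scalar_mx.
rewrite -scalemxAl scalerA -[X in X - _]scale1r -scalerBl.
by congr (_ *: _); rewrite /k; field.
Qed.

End ShermanMorrison.

Lemma update_identity (R : fieldType) (d : nat) (A : 'M[R]_d) (c : R)
    (x : 'cV[R]_d) (P := invmx (1%:M + c^-1 *: A))
    (Di := invmx (invmx (invmx A + c^-1%:M) + x *m x^T))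
    (k := (1 + (x^T *m (invmx A + c^-1%:M) *m x) 0 0)^-1) :
  A \in unitmx -> 1%:M + c^-1 *: A \in unitmx ->
  1 + (x^T *m (invmx A + c^-1%:M) *m x) 0 0 != 0 ->
  P *m Di *m (x *m x^T) *m Di *m P - invmx A + P *m (Di *m P + c^-1%:M)
  = (k ^+ 2 - k) *: (invmx A *m x *m (x^T *m invmx A)).
Proof.
move=> uA uK den_neq0.
set K := 1%:M + c^-1 *: A; set Ai := invmx A; set M := Ai + c^-1%:M.
have AiK : Ai *m K = M by rewrite mulmxDr mulmx1 -scalemxAr mulVmx // scalemx1.
have KAi : K *m Ai = M by rewrite mulmxDl mul1mx -scalemxAl mulmxV // scalemx1.
have PM : P *m M = Ai by rewrite -KAi mulmxA mulVmx // mul1mx.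
have MP : M *m P = Ai by rewrite -AiK -mulmxA mulmxV // mulmx1.
have uM : M \in unitmx by rewrite -AiK unitmx_mul uK unitmx_inv uA.
have Ai_split : Ai = Ai *m P + c^-1 *: P.
  by rewrite -[Ai in LHS]mulmx1 -(mulmxV uK) mulmxA AiK mulmxDl mul_scalar_mx.
have T1 : P *m Di *m (x *m x^T) *m Di *m P = k ^+ 2 *: (Ai *m x *m (x^T *m Ai)).
  rewrite mulmxA -(mulmxA P Di x) invmx_add_outer_mulmx //.
  rewrite -(mulmxA _ x^T Di) trmx_mulmx_invmx_add_outer // -/Ai -/M -/k.
  by rewrite -!(scalemxAr, scalemxAl) scalerA -expr2 !mulmxA PM -!mulmxA MP.
have T2 : P *m (Di *m P) = Ai *m P - k *: (Ai *m x *m (x^T *m Ai)).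
  rewrite /Di invmx_add_outer // -/Ai -/M -/k mulmxBl mulmxBr -scalemxAl -scalemxAr.
  by rewrite !mulmxA PM -!mulmxA MP !mulmxA.
have zmod_cancel (V : zmodType) (a u e w : V) : a - (u + e) + (u - w + e) = a - w.
  by rewrite addrACA opprD addrNK addrCA [u + _]addrC addrK.
by rewrite mulmxDr mul_mx_scalar T1 T2 [X in _ - X + _]Ai_split zmod_cancel scalerBl.
Qed.

Section PositiveDefinite.
Variables (R : realFieldType) (d : nat).
Implicit Types (M N : 'M[R]_d) (u v : 'cV[R]_d).

Definition qform M v := (v^T *m M *m v) 0 0.
Definition posdef M := M^T = M /\ forall v, v != 0 -> 0 < qform M v.
Definition psdef M := M^T = M /\ forall v, 0 <= qform M v.

Lemma trmx_mul_self_sum v : (v^T *m v) 0 0 = \sum_i v i 0 ^+ 2.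
Proof. by rewrite mxE; apply: eq_bigr => i _; rewrite mxE expr2. Qed.

Lemma trmx_mul_self_gt0 v : v != 0 -> 0 < (v^T *m v) 0 0.
Proof.
move=> v_neq0; rewrite lt_def trmx_mul_self_sum sumr_ge0 ?andbT => [|i _]; last first.
  exact: sqr_ge0.
apply: contra v_neq0 => /eqP /(psumr_eq0P (fun i _ => sqr_ge0 _)) v2_eq0.
apply/eqP/matrixP => i j; rewrite (ord1 j) mxE.
by apply/eqP; rewrite -sqrf_eq0 v2_eq0.
Qed.

Lemma qformZ a M v : qform (a *: M) v = a * qform M v.
Proof. by rewrite /qform -scalemxAr -scalemxAl mxE. Qed.

Lemma qformD M N v : qform (M + N) v = qform M v + qform N v.
Proof. by rewrite /qform mulmxDr mulmxDl mxE. Qed.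

Lemma qform_outer u v : qform (u *m u^T) v = (u^T *m v) 0 0 ^+ 2.
Proof.
rewrite /qform !mulmxA -(mulmxA _ u^T v) mxE big_ord1 expr2; congr (_ * _).
by rewrite -[v^T *m u]trmxK trmx_mul trmxK mxE.
Qed.

Lemma posdef_psdef M : posdef M -> psdef M.
Proof.
move=> [symM posM]; split=> // v; have [->|/posM/ltW //] := eqVneq v 0.
by rewrite /qform !mulmx0 mxE.
Qed.

Lemma posdef_scalar a : 0 < a -> posdef a%:M.
Proof.
move=> a_gt0; split=> [|v v_neq0]; first exact: tr_scalar_mx.
by rewrite -scalemx1 qformZ pmulr_rgt0 // /qform mulmx1 trmx_mul_self_gt0.
Qed.

Lemma posdef_add M N : posdef M -> psdef N -> posdef (M + N).
Proof.
move=> [symM posM] [symN nnegN]; split=> [|v v_neq0].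
  by rewrite raddfD /= symM symN.
by rewrite qformD ltr_pwDl ?posM.
Qed.

Lemma psdefZ a M : 0 <= a -> psdef M -> psdef (a *: M).
Proof.
move=> a_ge0 [symM nnegM]; split=> [|v]; first by rewrite linearZ /= symM.
by rewrite qformZ mulr_ge0.
Qed.

Lemma psdef_outer u : psdef (u *m u^T).
Proof. by split=> [|v]; rewrite ?trmx_mul ?trmxK // qform_outer sqr_ge0. Qed.

Lemma nsd_scale_outer a u : a <= 0 -> nsd (a *: (u *m u^T)).
Proof.
move=> a_le0; split=> [|v]; first by rewrite linearZ /= trmx_mul trmxK.
by rewrite -/(qform _ v) qformZ qform_outer mulr_le0_ge0 ?sqr_ge0.
Qed.

Lemma posdef_unitmx M : posdef M -> M \in unitmx.
Proof.
move=> [_ posM]; rewrite unitmxE unitfE; apply/negP => /det0P [u u_neq0 uM0].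
have : 0 < qform M u^T by apply: posM; rewrite -trmx0 (inj_eq trmx_inj).
by rewrite /qform trmxK uM0 mul0mx mxE ltxx.
Qed.

Lemma posdef_inv M : posdef M -> posdef (invmx M).
Proof.
move=> posdefM; have uM := posdef_unitmx posdefM; case: posdefM => symM posM.
split=> [|v v_neq0]; first by rewrite trmx_inv symM.
set w := invmx M *m v; have vE : v = M *m w by rewrite mulmxA mulmxV ?mul1mx.
have -> : qform (invmx M) v = qform M w.
  by rewrite /qform [in LHS]vE trmx_mul symM -!mulmxA mulKVmx.
by apply: posM; apply: contra v_neq0 => /eqP w0; rewrite vE w0 mulmx0.
Qed.

End PositiveDefinite.

Lemma update_nsd (R : realFieldType) (d : nat) (A : 'M[R]_d) (c : R)
    (x : 'cV[R]_d) : 0 < c -> posdef A ->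
  let P := invmx (1%:M + c^-1 *: A) in
  let Di := invmx (invmx (invmx A + c^-1%:M) + x *m x^T) in
  nsd (P *m Di *m (x *m x^T) *m Di *m P - invmx A + P *m (Di *m P + c^-1%:M)).
Proof.
move=> c_gt0 posdefA P Di; have cV_ge0 : 0 <= c^-1 by rewrite invr_ge0 ltW.
have posdefK : posdef (1%:M + c^-1 *: A).
  by apply: posdef_add; [exact: posdef_scalar | exact: psdefZ (posdef_psdef _)].
have posdefM : posdef (invmx A + c^-1%:M).
  apply: posdef_add; first exact: posdef_inv.
  by apply/posdef_psdef/posdef_scalar; rewrite invr_gt0.
have s_ge0 : 0 <= (x^T *m (invmx A + c^-1%:M) *m x) 0 0.
  exact: (posdef_psdef posdefM).2.
rewrite /P /Di update_identity ?posdef_unitmx // ?gt_eqF ?ltr_pwDl //.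
have -> : x^T *m invmx A = (invmx A *m x)^T by rewrite trmx_mul trmx_inv posdefA.1.
apply: nsd_scale_outer; set k := _^-1.
have k_gt0 : 0 < k by rewrite invr_gt0 ltr_pwDl.
have k_le1 : k <= 1 by rewrite invf_le1 ?ler_wpDr ?ltr_pwDl.
nra.
Qed.

Lemma posdef_Dseq (R : realFieldType) (d : nat) (b c : R) (x : nat -> 'cV[R]_d)
  (t : nat) : 0 < b -> b < c -> posdef (Dseq b c x t).
Proof.
move=> b_gt0 b_lt_c; have c_gt0 := lt_trans b_gt0 b_lt_c.
elim: t => [|t IH] /=.
  by apply: posdef_scalar; rewrite divr_gt0 ?mulr_gt0 ?subr_gt0.
apply: posdef_add (psdef_outer _); apply/posdef_inv/posdef_add.
  exact: posdef_inv.
by apply/posdef_psdef/posdef_scalar; rewrite invr_gt0.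
Qed.

Theorem lemma3 (R : realFieldType) (d : nat) (b c : R) (x : nat -> 'cV[R]_d)
  (hb : 0 < b) (hbc : b < c) (t : nat) (ht : (1 <= t)%N) :
  nsd (Dprime b c x t.-1 *m invmx (Dseq b c x t) *m (x t *m (x t)^T)
         *m invmx (Dseq b c x t) *m Dprime b c x t.-1
       - invmx (Dseq b c x t.-1)
       + Dprime b c x t.-1 *m (invmx (Dseq b c x t) *m Dprime b c x t.-1
                               + c^-1%:M)).
Proof.
case: t ht => // t _.
exact: update_nsd (lt_trans hb hbc) (posdef_Dseq x t hb hbc).
Qed.
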